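(* Let $n\ge3$ and suppose $T=T_\lambda(r,m)$ acts linearly and inner faithfully on $\Bbbk\overline{Q}$ so that $g$ acts by a reflection: $g\cdot e_i=e_{n-(d+i)}$, $g\cdot a_i=\mu_ia^*_{n-(d+i+1)}$, $g\cdot a_i^*=\mu_i^*a_{n-(d+i+1)}$ for some integer $0\le d\le n-1$ and $\mu_i,\mu_i^*\in\Bbbk^\times$, and that this action descends to an action on $\Pi_Q$. Let $\sigma$ be the quiver-Taft map. (I) If $j$ is a vertex with $g\cdot j=j$ and $c_j,c_j^*\in\Bbbk$ satisfy $\sigma(a_j)=c_ja^*_{j-1}$, $\sigma(a_j^* )=c_j^*a_j^*$, then $c_j^*=-\mu_j^{-1}c_j$; and if $c_j\neq0$ then $\mu_i\mu_i^*=1$ for all $i$. (II) If $k$ is a vertex with $g\cdot k=k+1$ and $g\cdot(k+1)=k$, and $c_k,c_k^*\in\Bbbk$ satisfy $\sigma(a_k)=c_ke_k$, $\sigma(a_k^* )=c_k^*e_{k+1}$, and if for all $i$ the identity $a_i^*\sigma(a_i)+\sigma(a_i^* )(g\cdot a_i)-a_{i+1}\sigma(a_{i+1}^* )-\sigma(a_{i+1})(g\cdot a_{i+1}^* )=0$ holds in $\Pi_Q$, then $c_k=-\mu_kc_k^*$; and if $c_k\neq0$ then $\lambda=-1$ and $\mu_i\mu_i^*=1$ for all $i$.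
   Context: Let $\Bbbk$ be a field, $r>1$ and $m$ positive integers with $r\mid m$, and $\lambda\in\Bbbk$ a primitive $r$-th root of unity, with $r$ coprime to the characteristic of $\Bbbk$. The generalized Taft algebra $T=T_\lambda(r,m)$ is the Hopf algebra generated by $g,x$ with relations $gx=\lambda xg$, $g^m=1$, $x^r=0$, $\Delta(g)=g\otimes g$, $\Delta(x)=1\otimes x+x\otimes g$, $\varepsilon(g)=1,\varepsilon(x)=0$, $S(g)=g^{-1}$, $S(x)=-xg^{-1}$. An action of $T$ on an algebra $A$ is a $T$-module algebra structure; so $g$ acts by an algebra automorphism and $x\cdot(ab)=a(x\cdot b)+(x\cdot a)(g\cdot b)$. It is inner faithful if no nonzero Hopf ideal $I$ of $T$ satisfies $I\cdot A=0$. Vertex indices are taken modulo $n$. $\overline{Q}$ has vertices $0,\dots,n-1$ and arrows $a_i:i\to i+1$, $a_i^*:i+1\to i$; in $\Bbbk\overline{Q}$, $e_i$ is the trivial path at $i$, $s(a),t(a)$ source and target, and $pq$ is concatenation ($p$ then $q$) if $t(p)=s(q)$, else $0$. $\Pi_Q=\Bbbk\overline{Q}/(\Omega)$, $(\Omega)$ the ideal generated by $a_i^*a_i-a_{i+1}a_{i+1}^*$; the action descends to $\Pi_Q$ if $(\Omega)$ is stable under $g$ and $x$. A linear action: $g$ acts by a path-length-preserving automorphism ($g\cdot e_i=e_{g\cdot i}$) and $x$ maps vertices into the span of vertices and arrows into the span of vertices and arrows. Then there are scalars $\gamma_i$ with $x\cdot e_i=\gamma_ie_i-\gamma_i\lambda^{-1}e_{g\cdot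 i}$; the quiver-Taft map $\sigma$ is the linear map on the span of vertices and arrows with $\sigma(e_i)=0$ and $\sigma(a)=x\cdot a-\gamma_{t(a)}a+\gamma_{s(a)}\lambda^{-1}(g\cdot a)$ for arrows $a$. *)

From mathcomp Require Import all_boot all_algebra.
Set Implicit Arguments. Unset Strict Implicit. Unset Printing Implicit Defensive.
Import GRing.Theory.
Local Open Scope ring_scope.

(* The double quiver \overline{Q} of the cyclic quiver with n vertices.      *)
(* Vertices: 'Z_n (this is Z/nZ for n >= 2; the theorem assumes n >= 3).    *)
(* Arrows: (i, false) = a_i : i -> i+1 ,  (i, true) = a_i^* : i+1 -> i.     *)
(* A path is a pair (start vertex, list of arrows); (i, [::]) is e_i.         *)
(* The path algebra k\overline{Q} is the set of finitely supported functions *)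
(* paths -> k vanishing on non-composable pairs, with concatenation product   *)
(* (pq = p then q).                                                          *)

Section Quiver.
Variable n : nat.

Definition arrow := ('Z_n * bool)%type.
Definition qpath := ('Z_n * seq arrow)%type.

Definition asrc (a : arrow) : 'Z_n := if a.2 then a.1 + 1 else a.1.
Definition atgt (a : arrow) : 'Z_n := if a.2 then a.1 else a.1 + 1.

Fixpoint composable (v : 'Z_n) (s : seq arrow) : bool :=
  if s is a :: s' then (asrc a == v) && composable (atgt a) s' else true.

Definition valid_path (p : qpath) : bool := composable p.1 p.2.

Definition pend (p : qpath) : 'Z_n := last p.1 (map atgt p.2).

Variable k : fieldType.

Definition KQ := qpath -> k.

Definition kzero : KQ := fun _ => 0.
Definition kadd (f h : KQ) : KQ := fun p => f p + h p.
Definition kopp (f : KQ) : KQ := fun p => - f p.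
Definition kscale (c : k) (f : KQ) : KQ := fun p => c * f p.
Definition kmul (f h : KQ) : KQ := fun p =>
  \sum_(i < (size p.2).+1)
     f (p.1, take i p.2) * h (pend (p.1, take i p.2), drop i p.2).
Definition kone : KQ := fun p => if p.2 is [::] then 1 else 0.

Definition kpath (q : qpath) : KQ := fun p => (p == q)%:R.
Definition ev (i : 'Z_n) : KQ := kpath (i, [::]).
Definition arr (a : arrow) : KQ := kpath (asrc a, [:: a]).
Definition a_ (i : 'Z_n) : KQ := arr (i, false).
Definition ast (i : 'Z_n) : KQ := arr (i, true).

Definition inkQ (f : KQ) : Prop :=
  (forall p, ~~ valid_path p -> f p = 0) /\
  exists s : seq qpath, forall p, p \notin s -> f p = 0.

(* preprojective relation at vertex i+1: a_i^* a_i - a_{i+1} a_{i+1}^* *)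
Definition omega (i : 'Z_n) : KQ :=
  kadd (kmul (ast i) (a_ i)) (kopp (kmul (a_ (i + 1)) (ast (i + 1)))).

Inductive inOmega : KQ -> Prop :=
| inOmega0 : inOmega kzero
| inOmega_gen u i v : inkQ u -> inkQ v -> inOmega (kmul (kmul u (omega i)) v)
| inOmega_add f h : inOmega f -> inOmega h -> inOmega (kadd f h).

(* An action is given by the operators G (action of g) and X (action of x).  *)

Variables (r m : nat) (lam : k).

Definition kQ_linear (F : KQ -> KQ) : Prop :=
  (forall f, inkQ f -> inkQ (F f)) /\
  (forall f h, inkQ f -> inkQ h -> F (kadd f h) = kadd (F f) (F h)) /\
  (forall c f, inkQ f -> F (kscale c f) = kscale c (F f)).

(* T-module algebra structure: G, X linear on kQ, satisfying the defining
   relations g^m = 1, x^r = 0, g x = lam x g of T, and the module-algebra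
   axioms h.(ab) = (h1.a)(h2.b), h.1 = eps(h) 1 for h = g, x. *)
Record taft_module_algebra (G X : KQ -> KQ) : Prop := {
  tma_G_lin : kQ_linear G;
  tma_X_lin : kQ_linear X;
  tma_gm : forall f, inkQ f -> iter m G f = f;
  tma_xr : forall f, inkQ f -> iter r X f = kzero;
  tma_gx : forall f, inkQ f -> G (X f) = kscale lam (X (G f));
  tma_G_mul : forall f h, inkQ f -> inkQ h -> G (kmul f h) = kmul (G f) (G h);
  tma_G_one : G kone = kone;
  tma_X_mul : forall f h, inkQ f -> inkQ h ->
     X (kmul f h) = kadd (kmul f (X h)) (kmul (X f) (G h));
  tma_X_one : X kone = kzero
}.

(* ---- The Hopf algebra T = T_lam(r,m), with basis g^i x^j (i<m, j<r). ---- *)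
Definition Tt := {ffun 'I_m * 'I_r -> k}.
Definition TTt := {ffun ('I_m * 'I_r) * ('I_m * 'I_r) -> k}.

Definition Tscale (c : k) (t : Tt) : Tt := [ffun p => c * t p].
Definition TTscale (c : k) (z : TTt) : TTt := [ffun p => c * z p].

(* bas i j = g^i x^j (g-exponent taken mod m, and = 0 when j >= r) *)
Definition bas (i j : nat) : Tt :=
  [ffun p : 'I_m * 'I_r => (((p.1 : nat) == (i %% m)%N) && ((p.2 : nat) == j))%:R].

(* product: (g^i x^j)(g^k x^l) = lam^(-jk) g^(i+k) x^(j+l) *)
Definition mulT (t u : Tt) : Tt :=
  \sum_(p : 'I_m * 'I_r) \sum_(q : 'I_m * 'I_r)
     Tscale (t p * u q * lam ^- (p.2 * q.1)) (bas (p.1 + q.1) (p.2 + q.2)).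

Definition oneT : Tt := bas 0 0.

Definition tens (t u : Tt) : TTt := [ffun q => t q.1 * u q.2].

Definition mulTT (z w : TTt) : TTt :=
  \sum_(q1 : ('I_m * 'I_r) * ('I_m * 'I_r)) \sum_(q2 : ('I_m * 'I_r) * ('I_m * 'I_r))
    TTscale (z q1 * w q2)
      (tens (mulT (bas q1.1.1 q1.1.2) (bas q2.1.1 q2.1.2))
            (mulT (bas q1.2.1 q1.2.2) (bas q2.2.1 q2.2.2))).

(* comultiplication: Delta(g) = g (x) g, Delta(x) = 1 (x) x + x (x) g,
   extended multiplicatively: Delta(g^i x^j) = Delta(g)^i Delta(x)^j *)
Definition DeltaG : TTt := tens (bas 1 0) (bas 1 0).
Definition DeltaX : TTt := tens oneT (bas 0 1) + tens (bas 0 1) (bas 1 0).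
Definition DeltaB (p : 'I_m * 'I_r) : TTt :=
  mulTT (iter p.1 (mulTT DeltaG) (tens oneT oneT)) (iter p.2 (mulTT DeltaX) (tens oneT oneT)).
Definition DeltaT (t : Tt) : TTt := \sum_(p : 'I_m * 'I_r) TTscale (t p) (DeltaB p).

Definition epsT (t : Tt) : k := \sum_(p : 'I_m * 'I_r) ((p.2 : nat) == 0)%:R * t p.

(* antipode (anti-multiplicative): S(g) = g^{-1} = g^(m-1), S(x) = - x g^{-1},
   S(g^i x^j) = S(x)^j S(g)^i *)
Definition Sx : Tt := - mulT (bas 0 1) (bas m.-1 0).
Definition SB (p : 'I_m * 'I_r) : Tt :=
  mulT (iter p.2 (mulT Sx) oneT) (iter p.1 (mulT (bas m.-1 0)) oneT).
Definition ST (t : Tt) : Tt := \sum_(p : 'I_m * 'I_r) Tscale (t p) (SB p).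

(* z \in I (x) T + T (x) I *)
Definition in_coideal_target (I : Tt -> Prop) (z : TTt) : Prop :=
  exists s : seq (Tt * Tt),
    (forall u, u \in s -> I u.1 \/ I u.2) /\ z = \sum_(u <- s) tens u.1 u.2.

Definition hopf_ideal (I : Tt -> Prop) : Prop :=
  [/\ I 0,
      (forall t u, I t -> I u -> I (t + u)),
      (forall c t, I t -> I (Tscale c t)),
      (forall t u, I t -> I (mulT t u) /\ I (mulT u t)) &
      (forall t, I t -> [/\ epsT t = 0, in_coideal_target I (DeltaT t) & I (ST t)])].

Definition actT (G X : KQ -> KQ) (t : Tt) (f : KQ) : KQ := fun q =>
  \sum_(p : 'I_m * 'I_r) t p * iter p.1 G (iter p.2 X f) q.

Definition inner_faithful (G X : KQ -> KQ) : Prop :=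
  forall I : Tt -> Prop, hopf_ideal I ->
    (forall t f, I t -> inkQ f -> actT G X t f = kzero) ->
    forall t, I t -> t = 0.

(* x maps vertices into the span of vertices, arrows into the span of
   vertices and arrows *)
Definition x_linear (X : KQ -> KQ) : Prop :=
  (forall i p, (0 < size p.2)%N -> X (ev i) p = 0) /\
  (forall a p, (1 < size p.2)%N -> X (arr a) p = 0).

Definition sigma (G X : KQ -> KQ) (gam : 'Z_n -> k) (a : arrow) : KQ :=
  kadd (kadd (X (arr a)) (kscale (- gam (atgt a)) (arr a)))
       (kscale (gam (asrc a) * lam^-1) (G (arr a))).

End Quiver.

Arguments kzero {n k}.
Arguments kone {n k}.
Arguments kpath {n k}.
Arguments ev {n k}.
Arguments arr {n k}.
Arguments a_ {n k}.
Arguments ast {n k}.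
Arguments omega {n k}.

(* Every identity is read off from the coefficients of a few paths of length at most two.
   Elements of (Omega) vanish on paths of length < 2 and on paths made of starred arrows only,
   and for them the coefficients of the two 2-cycles a_{v-1}^* a_{v-1} and a_v a_v^* at a
   vertex v sum to zero; applied to g.omega_i this shows that mu_i mu_i^* does not depend on i.
   On the span of vertices and arrows g acts by a monomial matrix, so the relation
   g x = lam x g can be compared coefficientwise at the vertices and arrows that the
   reflection fixes or swaps.
   (I) At a fixed vertex j this gives gamma_j = 0. Evaluating x.omega_j at a starred path gives
   c_j^* = -mu_j^{-1} c_j, and the 2-cycle relation for x.omega_{j-1} reduces to
   (lam - 1)(c_j^* + mu_j^* c_j) = 0.
   (II) The hypothesis evaluated at the path a_k^* gives c_k = -mu_k c_k^*; comparing g x.a_k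
   with lam x g.a_k at e_{k+1} gives lam = -1, and applying g once more gives
   c_k = lam^2 mu_k mu_k^* c_k. *)

From mathcomp Require Import all_boot all_algebra ring.
From Stdlib Require Import FunctionalExtensionality.
Set Implicit Arguments. Unset Strict Implicit. Unset Printing Implicit Defensive.
Import GRing.Theory.
Local Open Scope ring_scope.

Section PathAlgebra.
Variables (n : nat) (k : fieldType).
Local Notation KQ := (KQ n k).
Implicit Types (f h : KQ) (p q : qpath n).

Lemma kpathE q p : kpath q p = (p == q)%:R :> k.
Proof. by []. Qed.

Lemma kmul_path1 f h v a : kmul f h (v, [:: a]) =
  f (v, [::]) * h (v, [:: a]) + f (v, [:: a]) * h (atgt a, [::]).
Proof. by rewrite /kmul /= !big_ord_recl big_ord0 addr0. Qed.

Lemma kmul_path2 f h v a b : kmul f h (v, [:: a; b]) =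
  f (v, [::]) * h (v, [:: a; b]) + f (v, [:: a]) * h (atgt a, [:: b])
  + f (v, [:: a; b]) * h (atgt b, [::]).
Proof. by rewrite /kmul /= !big_ord_recl big_ord0 addr0 addrA. Qed.

Lemma kmul_kpath_eq0 p1 p2 q :
  q.2 != p1.2 ++ p2.2 -> kmul (kpath p1) (kpath p2) q = 0 :> k.
Proof.
move=> q_ne; rewrite /kmul big1 // => i _; rewrite !kpathE.
case: eqP => [e1|_]; last by rewrite mul0r.
case: eqP => [e2|_]; last by rewrite mulr0.
by rewrite -e1 -e2 /= cat_take_drop eqxx in q_ne.
Qed.

Lemma composable_cat v l1 l2 :
  composable v (l1 ++ l2) = composable v l1 && composable (last v (map (@atgt n) l1)) l2.
Proof. by elim: l1 v => [|a l1 IH] v //=; rewrite IH andbA. Qed.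

Lemma inkQ_kpath q : valid_path q -> inkQ (kpath q : KQ).
Proof.
move=> q_valid; split; last by exists [:: q] => p; rewrite inE kpathE => /negbTE->.
by move=> p; rewrite kpathE; case: eqP => // ->; rewrite q_valid.
Qed.

Lemma inkQ_ev v : inkQ (ev v : KQ).
Proof. exact: inkQ_kpath. Qed.

Lemma inkQ_arr a : inkQ (arr a : KQ).
Proof. by apply: inkQ_kpath; rewrite /valid_path /= eqxx. Qed.

Lemma inkQ_kzero : inkQ (kzero : KQ).
Proof. by split => //; exists [::]. Qed.

Lemma inkQ_kadd f h : inkQ f -> inkQ h -> inkQ (kadd f h).
Proof.
move=> [f_valid [sf f_fin]] [h_valid [sh h_fin]]; split.
  by move=> p p_invalid; rewrite /kadd f_valid // h_valid // addr0.
exists (sf ++ sh) => p; rewrite mem_cat negb_or => /andP[p_sf p_sh].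
by rewrite /kadd f_fin // h_fin // addr0.
Qed.

Lemma inkQ_kscale c f : inkQ f -> inkQ (kscale c f).
Proof.
move=> [f_valid [sf f_fin]]; split => [p p_invalid|].
  by rewrite /kscale f_valid // mulr0.
by exists sf => p p_sf; rewrite /kscale f_fin // mulr0.
Qed.

Lemma kopp_scale f : kopp f = kscale (-1) f.
Proof. by apply: functional_extensionality => p; rewrite /kopp /kscale mulN1r. Qed.

Lemma inkQ_kopp f : inkQ f -> inkQ (kopp f).
Proof. by rewrite kopp_scale; apply: inkQ_kscale. Qed.

Lemma inkQ_kmul_kpath p1 p2 : valid_path p1 -> valid_path p2 ->
  inkQ (kmul (kpath p1) (kpath p2) : KQ).
Proof.
move=> p1_valid p2_valid; split => [p p_invalid|].
  rewrite /kmul big1 // => i _; rewrite !kpathE.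
  case: eqP => [e1|_]; last by rewrite mul0r.
  case: eqP => [e2|_]; last by rewrite mulr0.
  suff : valid_path p by rewrite (negbTE p_invalid).
  move: p1_valid p2_valid; rewrite -e1 -e2 /valid_path /pend /= => v1 v2.
  by rewrite -(cat_take_drop i p.2) composable_cat v1 v2.
exists [:: (p1.1, p1.2 ++ p2.2)] => p; rewrite inE => p_ne.
have [p_cat|] := eqVneq p.2 (p1.2 ++ p2.2); last exact: kmul_kpath_eq0.
rewrite /kmul big1 // => i _; rewrite !kpathE.
case: eqP => [e1|_]; last by rewrite mul0r.
case: eqP => [e2|_]; last by rewrite mulr0.
by move: p_ne; rewrite -e1 -e2 /= cat_take_drop -surjective_pairing eqxx.
Qed.

Lemma inkQ_kmul_arr a b : inkQ (kmul (arr a) (arr b) : KQ).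
Proof. by apply: inkQ_kmul_kpath; rewrite /valid_path /= eqxx. Qed.

Lemma inkQ_kone : inkQ (kone : KQ).
Proof.
split; first by case=> v [|a l].
exists [seq (v, [::]) | v <- enum 'Z_n] => -[v [|a l]] //.
by move/negP; case; apply/mapP; exists v; rewrite ?mem_enum.
Qed.

Lemma kmul1k f : kmul kone f = f.
Proof.
apply: functional_extensionality => -[v l].
rewrite /kmul big_ord_recl /= take0 drop0 mul1r big1 ?addr0 // => i _.
by case: l i => [|a l] i; [case: i | rewrite /= mul0r].
Qed.

Lemma kmulk1 f : kmul f kone = f.
Proof.
apply: functional_extensionality => -[v l].
rewrite /kmul big_ord_recr /= take_size drop_size mulr1 big1 ?add0r // => i _.
case e: (drop _ l) => [|a l']; last by rewrite mulr0.
by have := ltn_ord i; rewrite -subn_gt0 -size_drop e.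
Qed.

Definition ksum (T : Type) (s : seq T) (F : T -> KQ) : KQ :=
  foldr (fun x acc => kadd (F x) acc) kzero s.

Lemma ksumE (T : Type) (s : seq T) (F : T -> KQ) p :
  ksum s F p = \sum_(x <- s) F x p.
Proof. by elim: s => [|x s IH]; rewrite ?big_nil // big_cons /= /kadd IH. Qed.

Lemma inkQ_ksum (T : Type) (s : seq T) (F : T -> KQ) :
  (forall x, inkQ (F x)) -> inkQ (ksum s F).
Proof. by move=> F_in; elim: s => [|x s IH] /=; [exact: inkQ_kzero | exact: inkQ_kadd]. Qed.

Definition deg_le1 f := forall p, (1 < size p.2)%N -> f p = 0.

End PathAlgebra.

Section PreprojectiveIdeal.
Variables (n : nat) (k : fieldType).
Local Notation KQ := (KQ n k).
Implicit Types (f h u w : KQ) (p q : qpath n).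

Lemma inOmega_omega i : inOmega (omega i : KQ).
Proof. by have := inOmega_gen i (@inkQ_kone n k) (@inkQ_kone n k); rewrite kmul1k kmulk1. Qed.

Lemma kmul_eq0l (P : pred (seq (arrow n))) f h :
  (forall l i, P l -> P (take i l)) -> (forall q, P q.2 -> f q = 0) ->
  forall p, P p.2 -> kmul f h p = 0.
Proof. by move=> Ptake f0 p Pp; rewrite /kmul big1 // => i _; rewrite f0 ?mul0r ?Ptake. Qed.

Lemma kmul_eq0r (P : pred (seq (arrow n))) f h :
  (forall l i, P l -> P (drop i l)) -> (forall q, P q.2 -> h q = 0) ->
  forall p, P p.2 -> kmul f h p = 0.
Proof. by move=> Pdrop h0 p Pp; rewrite /kmul big1 // => i _; rewrite h0 ?mulr0 ?Pdrop. Qed.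

Lemma inOmega_eq0 (P : pred (seq (arrow n))) f p :
  (forall l i, P l -> P (take i l) && P (drop i l)) ->
  (forall i q, P q.2 -> omega i q = 0 :> k) -> inOmega f -> P p.2 -> f p = 0.
Proof.
move=> Pfactor omega0 hf; elim: hf p => [//|u i w _ _ p Pp|f1 f2 _ IH1 _ IH2 p Pp].
  have Ptake l j : P l -> P (take j l) by move=> /(Pfactor _ j)/andP[].
  have Pdrop l j : P l -> P (drop j l) by move=> /(Pfactor _ j)/andP[].
  exact: kmul_eq0l w Ptake (kmul_eq0r u Pdrop (omega0 i)) _ Pp.
by rewrite /kadd IH1 // IH2 // addr0.
Qed.

Lemma omega_eq0 i p :
  p.2 \notin [:: [:: (i, true); (i, false)]; [:: (i + 1, false); (i + 1, true)]] ->
  omega i p = 0 :> k.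
Proof.
rewrite !inE negb_or => /andP[p_ne1 p_ne2].
by rewrite /omega /kadd /kopp !kmul_kpath_eq0 ?oppr0 ?addr0.
Qed.

Lemma inOmega_starred f p : inOmega f -> all snd p.2 -> f p = 0.
Proof.
apply: (inOmega_eq0 (P := all snd)) => [l i|i q q_starred].
  by rewrite -{1}(cat_take_drop i l) all_cat.
by apply: omega_eq0; apply: contraTN q_starred; rewrite !inE => /orP[]/eqP->.
Qed.

Lemma omega_short i p : (size p.2 < 2)%N -> omega i p = 0 :> k.
Proof.
move=> p_short; apply: omega_eq0; apply: contraTN p_short.
by rewrite !inE => /orP[]/eqP->.
Qed.

Lemma inOmega_short f p : inOmega f -> (size p.2 < 2)%N -> f p = 0.
Proof.
apply: (inOmega_eq0 (P := fun l => size l < 2)%N) => [l i l_short|]; last exact: omega_short.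
rewrite size_drop size_take_min.
by rewrite !(leq_ltn_trans _ l_short) ?geq_minr ?leq_subr.
Qed.

Definition loop_sum (v : 'Z_n) f : k :=
  f (v, [:: (v - 1, true); (v - 1, false)]) + f (v, [:: (v, false); (v, true)]).

(* The two 2-cycles at v occur, with opposite signs, in omega (v - 1) and in no other omega i. *)
Lemma loop_sum_omega i v : loop_sum v (omega i) = 0.
Proof.
rewrite /loop_sum /omega /kadd /kopp !kmul_path2 /a_ /ast /arr !kpathE /=.
rewrite !xpair_eqE /= !eqseq_cons !xpair_eqE /= !andbT !andbF /asrc /atgt /= subr_eq.
by case: (eqVneq v (i + 1)) => [->|_]; rewrite ?eqxx /=; ring.
Qed.

Lemma kmul_sandwich_path2 u h w v a b : (forall q, (size q.2 < 2)%N -> h q = 0) ->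
  kmul (kmul u h) w (v, [:: a; b]) = u (v, [::]) * h (v, [:: a; b]) * w (atgt b, [::]).
Proof.
move=> h_short.
have uh_short q : (size q.2 < 2)%N -> kmul u h q = 0.
  apply: (kmul_eq0r (P := fun l => size l < 2)%N) => // l i.
  by rewrite size_drop; apply: leq_ltn_trans (leq_subr _ _).
rewrite !kmul_path2 !uh_short // (h_short (atgt a, [:: b])) // (h_short (atgt b, [::])) //.
by ring.
Qed.

Lemma inOmega_loop_sum f v : inOmega f -> loop_sum v f = 0.
Proof.
elim=> [|u i w _ _|f1 f2 _ IH1 _ IH2]; first by rewrite /loop_sum /kzero addr0.
  rewrite /loop_sum !kmul_sandwich_path2; try exact: omega_short.
  have := loop_sum_omega i v; rewrite /loop_sum => omega_loop0.
  by rewrite /atgt /= subrK -mulrDl -mulrDr omega_loop0 mulr0 mul0r.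
by move: IH1 IH2; rewrite /loop_sum /kadd addrACA => -> ->; rewrite addr0.
Qed.

End PreprojectiveIdeal.

Arguments inOmega_omega {n k}.

Section LinearOperator.
Variables (n : nat) (k : fieldType) (F : KQ n k -> KQ n k).
Hypothesis F_lin : kQ_linear F.

Lemma lin_kzero : F kzero = kzero.
Proof.
have kscale0 f : kscale 0 f = kzero.
  by apply: functional_extensionality => p; rewrite /kscale mul0r.
by have := F_lin.2.2 0 kzero (@inkQ_kzero n k); rewrite !kscale0.
Qed.

Lemma lin_kopp f : inkQ f -> F (kopp f) = kopp (F f).
Proof. by move=> f_in; rewrite !kopp_scale F_lin.2.2. Qed.

Lemma lin_ksum (T : Type) (s : seq T) (P : T -> KQ n k) :
  (forall x, inkQ (P x)) -> F (ksum s P) = ksum s (fun x => F (P x)).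
Proof.
move=> P_in; elim: s => [|x s IH] /=; first exact: lin_kzero.
by rewrite F_lin.2.1 ?IH //; exact: inkQ_ksum.
Qed.

End LinearOperator.

Section TwistedDerivation.
Variables (n : nat) (k : fieldType) (G X : KQ n k -> KQ n k).
Hypotheses (G_lin : kQ_linear G) (X_lin : kQ_linear X).
Hypothesis G_mul : forall f h, inkQ f -> inkQ h -> G (kmul f h) = kmul (G f) (G h).
Hypothesis X_mul : forall f h, inkQ f -> inkQ h ->
  X (kmul f h) = kadd (kmul f (X h)) (kmul (X f) (G h)).

Lemma G_omega i : G (omega i) =
  kadd (kmul (G (ast i)) (G (a_ i))) (kopp (kmul (G (a_ (i + 1))) (G (ast (i + 1))))).
Proof.
rewrite /omega G_lin.2.1 ?(lin_kopp G_lin) ?G_mul //;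
  by [apply: inkQ_arr | apply: inkQ_kmul_arr | apply/inkQ_kopp/inkQ_kmul_arr].
Qed.

Lemma X_omega i : X (omega i) =
  kadd (kadd (kmul (ast i) (X (a_ i))) (kmul (X (ast i)) (G (a_ i))))
   (kopp (kadd (kmul (a_ (i + 1)) (X (ast (i + 1)))) (kmul (X (a_ (i + 1))) (G (ast (i + 1)))))).
Proof.
rewrite /omega X_lin.2.1 ?(lin_kopp X_lin) ?X_mul //;
  by [apply: inkQ_arr | apply: inkQ_kmul_arr | apply/inkQ_kopp/inkQ_kmul_arr].
Qed.

End TwistedDerivation.

Section Reflection.
Variables (n d : nat) (k : fieldType) (G : KQ n k -> KQ n k) (mu mus : 'Z_n -> k).
Implicit Type f : KQ n k.
Hypothesis G_lin : kQ_linear G.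
Hypothesis G_ev : forall i, G (ev i) = ev (n%:R - (d%:R + i)).
Hypothesis G_a : forall i, G (a_ i) = kscale (mu i) (ast (n%:R - (d%:R + i + 1))).
Hypothesis G_ast : forall i, G (ast i) = kscale (mus i) (a_ (n%:R - (d%:R + i + 1))).

Definition refl_vertex (v : 'Z_n) : 'Z_n := n%:R - (d%:R + v).
Definition refl_arrow (a : arrow n) : arrow n := (n%:R - (d%:R + a.1 + 1), ~~ a.2).

Definition refl (x : 'Z_n + arrow n) : 'Z_n + arrow n :=
  match x with inl v => inl (refl_vertex v) | inr a => inr (refl_arrow a) end.

Definition refl_coef (x : 'Z_n + arrow n) : k :=
  match x with inl _ => 1 | inr a => if a.2 then mus a.1 else mu a.1 end.

Definition short_path (x : 'Z_n + arrow n) : qpath n :=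
  match x with inl v => (v, [::]) | inr a => (asrc a, [:: a]) end.

Lemma refl_vertexK : involutive refl_vertex.
Proof. by move=> v; rewrite /refl_vertex; ring. Qed.

Lemma refl_arrowK : involutive refl_arrow.
Proof. by move=> [i b]; rewrite /refl_arrow /= negbK; congr pair; ring. Qed.

Lemma reflK : involutive refl.
Proof. by case=> [v|a] /=; rewrite ?refl_vertexK ?refl_arrowK. Qed.

Lemma short_path_inj : injective short_path.
Proof. by case=> [v|a] [w|b] //= [] => [->|_ ->]. Qed.

Lemma G_short_path x :
  G (kpath (short_path x)) = kscale (refl_coef x) (kpath (short_path (refl x))).
Proof.
case: x => [v|[i []]]; [|exact: G_ast|exact: G_a].
by rewrite [LHS]G_ev; apply: functional_extensionality => p; rewrite /kscale mul1r.
Qed.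

Lemma sum_mul_delta (I : finType) (T : eqType) (g : I -> T) (F : I -> k) y :
  injective g -> \sum_x F x * (g y == g x)%:R = F y.
Proof.
move=> g_inj; under eq_bigr do rewrite (inj_eq g_inj) eq_sym mulr_natr mulrb.
by rewrite -big_mkcond big_pred1_eq.
Qed.

Lemma deg_le1_decomp f : inkQ f -> deg_le1 f ->
  f = ksum (index_enum _) (fun x => kscale (f (short_path x)) (kpath (short_path x))).
Proof.
move=> [f_valid _] f_le1; apply: functional_extensionality => p; rewrite ksumE.
rewrite /kscale; under eq_bigr => x _ do rewrite kpathE.
have size_neq q : size p.2 != size q.2 -> (p == q) = false.
  by apply: contraNF => /eqP ->.
case: p size_neq => v [|a [|b l]] size_neq.
- exact/esym/(sum_mul_delta _ (inl v) short_path_inj).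
- have [<-|src_ne] := eqVneq (asrc a) v.
    exact/esym/(sum_mul_delta _ (inr a) short_path_inj).
  rewrite f_valid /valid_path /= ?(negbTE src_ne) // big1 // => -[w|c] _.
    by rewrite size_neq ?mulr0.
  rewrite /= xpair_eqE eqseq_cons andbT.
  by case: (eqVneq a c) => [<-|_]; rewrite ?andbF ?mulr0 // eq_sym (negbTE src_ne) mulr0.
- by rewrite f_le1 // big1 // => -[w|c] _; rewrite size_neq ?mulr0.
Qed.

Lemma G_deg_le1E f p : inkQ f -> deg_le1 f ->
  G f p = \sum_x f (short_path x) * (refl_coef x * (p == short_path (refl x))%:R).
Proof.
have short_in x : inkQ (kpath (short_path x) : KQ n k).
  by case: x => [v|a]; [exact: inkQ_ev | exact: inkQ_arr].
move=> f_in f_le1; rewrite {1}(deg_le1_decomp f_in f_le1) lin_ksum //; last first.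
  by move=> x; apply: inkQ_kscale.
rewrite ksumE; apply: eq_bigr => x _.
by rewrite G_lin.2.2 // G_short_path /kscale kpathE.
Qed.

Lemma G_refl_short_path f y : inkQ f -> deg_le1 f ->
  G f (short_path (refl y)) = refl_coef y * f (short_path y).
Proof.
move=> f_in f_le1; rewrite G_deg_le1E //.
under eq_bigr => x _ do rewrite mulrA [f _ * _]mulrC.
exact: (sum_mul_delta _ y (inj_comp short_path_inj (inv_inj reflK))).
Qed.

Lemma deg_le1_G f : inkQ f -> deg_le1 f -> deg_le1 (G f).
Proof.
move=> f_in f_le1 p p_long; rewrite G_deg_le1E // big1 // => x _.
suff -> : (p == short_path (refl x)) = false by rewrite !mulr0.
by apply: contraTF p_long => /eqP->; case: x.
Qed.

End Reflection.

Arguments refl_vertex : simpl never.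
Arguments refl_arrow : simpl never.

Ltac kQ_eval :=
  rewrite /kadd /kopp /kscale ?kmul_path2 ?kmul_path1;
  rewrite /a_ /ast /ev /arr ?kpathE /asrc /atgt /=;
  rewrite ?xpair_eqE ?eqseq_cons ?xpair_eqE /= ?subrK ?eqxx ?andbT ?andbF /=.

Section ReflectionAction.
Variables (n d : nat) (k : fieldType) (lam : k).
Variables (G X : KQ n k -> KQ n k) (mu mus gam : 'Z_n -> k).
Hypotheses (G_lin : kQ_linear G) (X_lin : kQ_linear X).
Hypothesis G_mul : forall f h, inkQ f -> inkQ h -> G (kmul f h) = kmul (G f) (G h).
Hypothesis X_mul : forall f h, inkQ f -> inkQ h ->
  X (kmul f h) = kadd (kmul f (X h)) (kmul (X f) (G h)).
Hypothesis GX : forall f, inkQ f -> G (X f) = kscale lam (X (G f)).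
Hypothesis X_deg : x_linear X.
Hypothesis G_ev : forall i, G (ev i) = ev (n%:R - (d%:R + i)).
Hypothesis G_a : forall i, G (a_ i) = kscale (mu i) (ast (n%:R - (d%:R + i + 1))).
Hypothesis G_ast : forall i, G (ast i) = kscale (mus i) (a_ (n%:R - (d%:R + i + 1))).
Hypothesis mu_neq0 : forall i, mu i != 0.
Hypothesis G_Omega : forall f, inOmega f -> inOmega (G f).
Hypothesis X_Omega : forall f, inOmega f -> inOmega (X f).
Hypothesis X_ev : forall i, X (ev i) =
  kadd (kscale (gam i) (ev i)) (kscale (- (gam i * lam^-1)) (ev (n%:R - (d%:R + i)))).
Hypothesis lam_neq1 : lam != 1.

Lemma mu_mus_succ i : mu i * mus i = mu (i + 1) * mus (i + 1).
Proof.
have := inOmega_loop_sum (n%:R - (d%:R + i + 1)) (G_Omega (inOmega_omega i)).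
rewrite /loop_sum (G_omega G_lin G_mul) G_ast G_a G_a G_ast.
have -> : n%:R - (d%:R + (i + 1) + 1) = n%:R - (d%:R + i + 1) - 1 :> 'Z_n by ring.
set v := n%:R - _; kQ_eval => loop0.
by apply/eqP; rewrite -subr_eq0 -[0]loop0; apply/eqP; ring.
Qed.

Lemma mu_mus_const i j : mu i * mus i = mu j * mus j.
Proof.
have mu_mus_shift (t : nat) : mu i * mus i = mu (i + t%:R) * mus (i + t%:R).
  by elim: t => [|t IH]; rewrite ?addr0 // IH mu_mus_succ -natr1 addrA.
by rewrite (mu_mus_shift (j - i)%R) natr_Zp addrC subrK.
Qed.

Lemma X_arrE a p : X (arr a) p =
  sigma lam G X gam a p + gam (atgt a) * arr a p - gam (asrc a) * lam^-1 * G (arr a) p.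
Proof. by rewrite /sigma /kadd /kscale; ring. Qed.

Lemma X_arr_deg_le1 a : deg_le1 (X (arr a)).
Proof. by move=> p; apply: X_deg.2. Qed.

Lemma inkQ_X_arr a : inkQ (X (arr a)).
Proof. exact/X_lin.1/inkQ_arr. Qed.

Lemma gam_fixed j : n%:R - (d%:R + j) = j -> gam j = 0.
Proof.
move=> hj.
have Xev_in : inkQ (X (ev j)) by apply/X_lin.1/inkQ_ev.
have Xev_le1 : deg_le1 (X (ev j)) by move=> p /ltnW; apply: X_deg.1.
have := G_refl_short_path G_lin G_ev G_a G_ast (inl j) Xev_in Xev_le1.
rewrite /= /refl_vertex hj GX ?G_ev ?hj ?X_ev ?hj; last exact: inkQ_ev.
kQ_eval => /esym fixed.
have : gam j * (1 - lam^-1) * (1 - lam) = 0.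
  by move/eqP: fixed; rewrite -subr_eq0 => /eqP <-; ring.
move/eqP; rewrite !mulf_eq0 !subr_eq0 ![1 == _]eq_sym invr_eq1 (negbTE lam_neq1) !orbF.
by move/eqP.
Qed.

Section FixedVertex.
Variables (j : 'Z_n) (cj cjs : k).
Hypothesis j_fixed : n%:R - (d%:R + j) = j.
Hypothesis sigma_a : sigma lam G X gam (j, false) = kscale cj (ast (j - 1)).
Hypothesis sigma_ast : sigma lam G X gam (j, true) = kscale cjs (ast j).

Let gam_j : gam j = 0 := gam_fixed j_fixed.

Let refl_j : n%:R - (d%:R + j + 1) = j - 1.
Proof. by rewrite -[in RHS]j_fixed; ring. Qed.

Let refl_pred : n%:R - (d%:R + (j - 1) + 1) = j.
Proof. by rewrite -[in RHS]j_fixed; ring. Qed.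

(* The cast gives the pair the type [arrow n] syntactically, as in the goals produced by
   [G_refl_short_path]; without it these equations cannot be used for rewriting. *)
Let refl_a_pred : refl_arrow d ((j - 1, false) : arrow n) = (j, true).
Proof. by rewrite /refl_arrow /=; congr pair; exact: refl_pred. Qed.

Let refl_a_j : refl_arrow d ((j, false) : arrow n) = (j - 1, true).
Proof. by rewrite /refl_arrow /=; congr pair; exact: refl_j. Qed.

Lemma fixed_coef_rel : cj + mu j * cjs = 0.
Proof.
have := inOmega_starred (p := (j + 1, [:: (j, true); (j - 1, true)]))
  (X_Omega (inOmega_omega j)) erefl.
rewrite (X_omega X_lin X_mul) /kadd /kopp !kmul_path2 !X_arrE sigma_a sigma_ast.
rewrite !G_a !G_ast !refl_j.
by kQ_eval => starred0; rewrite -[RHS]starred0 gam_j; ring.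
Qed.

Lemma fixed_ast_coef : cjs = - ((mu j)^-1 * cj).
Proof.
apply: (mulfI (mu_neq0 j)); rewrite mulrN mulVKf //.
by apply/eqP; rewrite -addr_eq0 addrC fixed_coef_rel.
Qed.

Lemma fixed_X_a_pred : X (a_ (j - 1)) (j - 1, [:: (j - 1, false)]) = lam * cjs.
Proof.
have Ga : G (arr (j - 1, false)) = kscale (mu (j - 1)) (ast j) by rewrite G_a refl_pred.
have := G_refl_short_path G_lin G_ev G_a G_ast (inr (j - 1, false))
  (inkQ_X_arr (j - 1, false)) (X_arr_deg_le1 (j - 1, false)).
rewrite GX ?Ga ?X_lin.2.2 /= ?refl_a_pred; try exact: inkQ_arr.
rewrite /kscale [in LHS]X_arrE sigma_ast G_ast refl_j gam_j; kQ_eval => e.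
by apply: (mulfI (mu_neq0 (j - 1))); apply: etrans (esym e) _; ring.
Qed.

Lemma fixed_X_ast_pred :
  mu (j - 1) * X (ast (j - 1)) (j, [:: (j, false)]) = lam * mus j * cj.
Proof.
have X_ast : mu j * X (ast (j - 1)) (j, [:: (j, false)]) = lam * (mus (j - 1) * cj).
  have Gs : G (arr (j - 1, true)) = kscale (mus (j - 1)) (a_ j) by rewrite G_ast refl_pred.
  have := G_refl_short_path G_lin G_ev G_a G_ast (inr (j, false))
    (inkQ_X_arr (j - 1, true)) (X_arr_deg_le1 (j - 1, true)).
  rewrite GX ?Gs ?X_lin.2.2 /= ?refl_a_j; try exact: inkQ_arr.
  rewrite /kscale [in LHS]X_arrE sigma_a G_a refl_j gam_j.
  by kQ_eval => e; apply: etrans (esym e) _; ring.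
apply: (mulfI (mu_neq0 j)); rewrite mulrCA X_ast.
transitivity (lam * cj * (mu (j - 1) * mus (j - 1))); first by ring.
by rewrite (mu_mus_const (j - 1) j); ring.
Qed.

Lemma fixed_loop_rel :
  X (a_ (j - 1)) (j - 1, [:: (j - 1, false)]) - cj * mus j
  + mu (j - 1) * X (ast (j - 1)) (j, [:: (j, false)]) - cjs = 0.
Proof.
have Ga : G (a_ (j - 1)) = kscale (mu (j - 1)) (ast j) by rewrite G_a refl_pred.
have := inOmega_loop_sum j (X_Omega (inOmega_omega (j - 1))).
rewrite /loop_sum (X_omega X_lin X_mul) subrK /kadd /kopp !kmul_path2.
rewrite !(X_arrE (j, _)) sigma_a sigma_ast Ga G_ast refl_j gam_j.
by kQ_eval => loop0; rewrite -[RHS]loop0; ring.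
Qed.

Lemma fixed_mu_mus : cj != 0 -> forall i, mu i * mus i = 1.
Proof.
move=> cj_neq0 i; rewrite (mu_mus_const i j).
have := fixed_loop_rel; rewrite fixed_X_a_pred fixed_X_ast_pred => loop0.
have /eqP : (lam - 1) * (cjs + mus j * cj) = 0 by rewrite -[RHS]loop0; ring.
rewrite mulf_eq0 subr_eq0 (negbTE lam_neq1) fixed_ast_coef /= => /eqP cancel0.
have : cj * (mu j * mus j - 1) = 0.
  by rewrite -(mulr0 (mu j)) -cancel0; field; exact: mu_neq0.
by move/eqP; rewrite mulf_eq0 (negbTE cj_neq0) subr_eq0 => /eqP.
Qed.

End FixedVertex.

Lemma fixed_vertex_coefs (j : 'Z_n) (cj cjs : k) :
  n%:R - (d%:R + j) = j ->
  sigma lam G X gam (j, false) = kscale cj (ast (j - 1)) ->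
  sigma lam G X gam (j, true) = kscale cjs (ast j) ->
  cjs = - ((mu j)^-1 * cj) /\ (cj != 0 -> forall i, mu i * mus i = 1).
Proof.
move=> j_fixed sigma_a sigma_ast.
split; first exact: fixed_ast_coef j_fixed sigma_a sigma_ast.
exact: fixed_mu_mus j_fixed sigma_a sigma_ast.
Qed.

Section SwappedEdge.
Variables (kk : 'Z_n) (ck cks : k).
Hypothesis kk_swap : n%:R - (d%:R + kk) = kk + 1.
Hypothesis kk1_swap : n%:R - (d%:R + (kk + 1)) = kk.
Hypothesis sigma_a : sigma lam G X gam (kk, false) = kscale ck (ev kk).
Hypothesis sigma_ast : sigma lam G X gam (kk, true) = kscale cks (ev (kk + 1)).
Hypothesis sigma_rel : inOmega
  (kadd (kadd (kmul (ast kk) (sigma lam G X gam (kk, false)))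
              (kmul (sigma lam G X gam (kk, true)) (G (a_ kk))))
        (kopp (kadd (kmul (a_ (kk + 1)) (sigma lam G X gam (kk + 1, true)))
                    (kmul (sigma lam G X gam (kk + 1, false)) (G (ast (kk + 1))))))).

Let refl_kk : n%:R - (d%:R + kk + 1) = kk.
Proof. by rewrite -[RHS](addrK 1 kk) -kk_swap; ring. Qed.

Let Ga : G (a_ kk) = kscale (mu kk) (ast kk).
Proof. by rewrite G_a refl_kk. Qed.

Let Gs : G (ast kk) = kscale (mus kk) (a_ kk).
Proof. by rewrite G_ast refl_kk. Qed.

Lemma swapped_coef_rel : ck + mu kk * cks = 0.
Proof.
have := inOmega_short (p := (kk + 1, [:: (kk, true)])) sigma_rel erefl.
rewrite /kadd /kopp !kmul_path1 sigma_a sigma_ast Ga !G_ast.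
by kQ_eval => short0; rewrite -[RHS]short0; ring.
Qed.

Lemma swapped_a_coef : ck = - (mu kk * cks).
Proof. by apply/eqP; rewrite -addr_eq0 swapped_coef_rel. Qed.

Lemma swapped_X_a : X (a_ kk) (kk, [::]) = ck.
Proof. by rewrite X_arrE sigma_a Ga; kQ_eval; ring. Qed.

Lemma swapped_X_ast : X (ast kk) (kk + 1, [::]) = cks.
Proof. by rewrite X_arrE sigma_ast Gs; kQ_eval; ring. Qed.

Lemma swapped_GX_a : G (X (a_ kk)) (kk + 1, [::]) = ck.
Proof.
have := G_refl_short_path G_lin G_ev G_a G_ast (inl kk)
  (inkQ_X_arr (kk, false)) (X_arr_deg_le1 (kk, false)).
by rewrite /= /refl_vertex kk_swap mul1r swapped_X_a.
Qed.

Lemma swapped_lam : ck != 0 -> lam = -1.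
Proof.
move=> ck_neq0; have := swapped_GX_a.
rewrite GX ?Ga ?X_lin.2.2 /kscale ?swapped_X_ast; try exact: inkQ_arr.
move=> e; apply: (mulIf ck_neq0).
by rewrite -{2}e -[mu kk * cks]opprK -swapped_a_coef; ring.
Qed.

Lemma swapped_mu_mus : ck != 0 -> forall i, mu i * mus i = 1.
Proof.
move=> ck_neq0 i; rewrite (mu_mus_const i kk).
have GXa_in : inkQ (G (X (a_ kk))) by apply/G_lin.1/inkQ_X_arr.
have GXa_le1 : deg_le1 (G (X (a_ kk))).
  apply: (deg_le1_G G_lin G_ev G_a G_ast); [exact: inkQ_X_arr | exact: X_arr_deg_le1].
have := G_refl_short_path G_lin G_ev G_a G_ast (inl (kk + 1)) GXa_in GXa_le1.
rewrite /= /refl_vertex kk1_swap mul1r swapped_GX_a.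
rewrite GX ?Ga ?X_lin.2.2 ?G_lin.2.2 ?GX ?Gs ?X_lin.2.2;
  try by [apply: inkQ_arr | apply: inkQ_X_arr | apply/inkQ_kscale/inkQ_X_arr].
rewrite /kscale swapped_X_a (swapped_lam ck_neq0) => e.
have : ck * (1 - mu kk * mus kk) = 0 by rewrite mulrBr mulr1 -{1}e; ring.
by move/eqP; rewrite mulf_eq0 (negbTE ck_neq0) subr_eq0 eq_sym => /eqP.
Qed.

End SwappedEdge.

Lemma swapped_edge_coefs (kk : 'Z_n) (ck cks : k) :
  n%:R - (d%:R + kk) = kk + 1 ->
  n%:R - (d%:R + (kk + 1)) = kk ->
  sigma lam G X gam (kk, false) = kscale ck (ev kk) ->
  sigma lam G X gam (kk, true) = kscale cks (ev (kk + 1)) ->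
  inOmega
    (kadd (kadd (kmul (ast kk) (sigma lam G X gam (kk, false)))
                (kmul (sigma lam G X gam (kk, true)) (G (a_ kk))))
          (kopp (kadd (kmul (a_ (kk + 1)) (sigma lam G X gam (kk + 1, true)))
                      (kmul (sigma lam G X gam (kk + 1, false)) (G (ast (kk + 1))))))) ->
  ck = - (mu kk * cks) /\ (ck != 0 -> lam = -1 /\ (forall i, mu i * mus i = 1)).
Proof.
move=> kk_swap kk1_swap sigma_a sigma_ast sigma_rel.
split=> [|ck_neq0]; first exact: swapped_a_coef kk_swap sigma_a sigma_ast sigma_rel.
split; first exact: swapped_lam kk_swap sigma_a sigma_ast sigma_rel ck_neq0.
exact: swapped_mu_mus kk_swap kk1_swap sigma_a sigma_ast sigma_rel ck_neq0.
Qed.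

End ReflectionAction.

Theorem lemma3p13
  (k : fieldType) (r m : nat) (lam : k) (n d : nat)
  (G X : KQ n k -> KQ n k) (mu mus gam : 'Z_n -> k) :
  (1 < r)%N -> (r %| m)%N -> r.-primitive_root lam -> (r%:R : k) != 0 ->
  (3 <= n)%N -> (d <= n.-1)%N ->
  (* T acts on k\overline{Q}, inner faithfully *)
  taft_module_algebra r m lam G X ->
  inner_faithful r m lam G X ->
  (* the action is linear, with g acting by a reflection *)
  x_linear X ->
  (forall i, G (ev i) = ev (n%:R - (d%:R + i))) ->
  (forall i, G (a_ i) = kscale (mu i) (ast (n%:R - (d%:R + i + 1)))) ->
  (forall i, G (ast i) = kscale (mus i) (a_ (n%:R - (d%:R + i + 1)))) ->
  (forall i, mu i != 0) -> (forall i, mus i != 0) ->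
  (* the action descends to Pi_Q *)
  (forall f, inOmega f -> inOmega (G f) /\ inOmega (X f)) ->
  (* the scalars gamma_i with x.e_i = gamma_i e_i - gamma_i lam^{-1} e_{g.i} *)
  (forall i, X (ev i) =
     kadd (kscale (gam i) (ev i)) (kscale (- (gam i * lam^-1)) (ev (n%:R - (d%:R + i))))) ->
  (* (I) *)
  (forall (j : 'Z_n) (cj cjs : k),
     n%:R - (d%:R + j) = j ->
     sigma lam G X gam (j, false) = kscale cj (ast (j - 1)) ->
     sigma lam G X gam (j, true) = kscale cjs (ast j) ->
     cjs = - ((mu j)^-1 * cj) /\ (cj != 0 -> forall i, mu i * mus i = 1))
  /\
  (* (II) *)
  (forall (kk : 'Z_n) (ck cks : k),
     n%:R - (d%:R + kk) = kk + 1 ->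
     n%:R - (d%:R + (kk + 1)) = kk ->
     sigma lam G X gam (kk, false) = kscale ck (ev kk) ->
     sigma lam G X gam (kk, true) = kscale cks (ev (kk + 1)) ->
     (forall i : 'Z_n, inOmega
        (kadd (kadd (kmul (ast i) (sigma lam G X gam (i, false)))
                    (kmul (sigma lam G X gam (i, true)) (G (a_ i))))
              (kopp (kadd (kmul (a_ (i + 1)) (sigma lam G X gam (i + 1, true)))
                          (kmul (sigma lam G X gam (i + 1, false)) (G (ast (i + 1)))))))) ->
     ck = - (mu kk * cks) /\ (ck != 0 -> lam = -1 /\ (forall i, mu i * mus i = 1))).
Proof.
move=> r_gt1 _ lam_prim _ _ _ TM _ X_deg G_ev G_a G_ast mu_neq0 _ Omega_stable X_ev.
have [G_lin X_lin _ _ GX G_mul _ X_mul _] := TM.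
have G_Omega f : inOmega f -> inOmega (G f) by case/Omega_stable.
have X_Omega f : inOmega f -> inOmega (X f) by case/Omega_stable.
have lam_neq1 : lam != 1.
  apply: contraTneq r_gt1 => lam1; rewrite -leqNgt; apply: dvdn_leq => //.
  by rewrite (prim_order_dvd lam_prim) expr1 lam1.
split=> [j cj cjs | kk ck cks kk_swap kk1_swap sigma_a sigma_ast sigma_rel].
  exact: fixed_vertex_coefs.
exact: swapped_edge_coefs kk_swap kk1_swap sigma_a sigma_ast (sigma_rel kk).
Qed.
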